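(* Consider the two-SP bandwidth allocation game with minimum small-cell bandwidth constraints described in the context. This game has a Nash equilibrium, and the Nash equilibrium is unique. Moreover, the total small-cell bandwidth $B_{1,S}+B_{2,S}$ at this equilibrium is at least the total small-cell bandwidth $B_{1,S}^{\mathrm{NE}}+B_{2,S}^{\mathrm{NE}}$ at the Nash equilibrium of the same game without the regulatory constraints.
   Context: Two service providers (SPs) $i=1,2$. SP $i$ owns bandwidth $B_i>0$ and chooses macro-cell bandwidth $B_{i,M}\ge0$ and small-cell bandwidth $B_{i,S}$ with $B_{i,M}+B_{i,S}\le B_i$ and $B_{i,S}\ge B_{i,S}^0$ (regulatory constraint), where $0\le B_{i,S}^0\le B_i$ are given; ''without the regulatory constraints'' means $B_{i,S}^0=0$. Parameters: $R_0>0$, $\lambda_S>1$, a mass $N_m>0$ of mobile users (served only by macro-cells) and a mass $N_f>0$ of fixed users, each with utility $u(r)=r^{1-\alpha}/(1-\alpha)$, $\alpha\in(0,1)$. SPs set per-unit-rate prices in a second stage after bandwidths are fixed; the second-stage price equilibrium is market-clearing, so that with $R_M=\frac{(B_{1,M}+B_{2,M})R_0}{N_m}$ and $R_S=\frac{\lambda_S(B_{1,S}+B_{2,S})R_0}{N_f}$ the macro and small-cell prices are $u'(R_M)=R_M^{-\alpha}$ and $u'(R_S)=R_S^{-\alpha}$. The payoff of SP $i$ in the bandwidth game is its revenue $S_i=\lambda_SB_{i,S}R_0\,u'(R_S)+B_{i,M}R_0\,u'(R_M)$, and a Nash equilibrium is a pair of feasible allocations in which each SP maximizes $S_i$ given the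 other's allocation. Without the regulatory constraints the unique Nash equilibrium is $B_{i,S}^{\mathrm{NE}}=\frac{N_f\lambda_S^{1/\alpha-1}B_i}{N_f\lambda_S^{1/\alpha-1}+N_m}$, $B_{i,M}^{\mathrm{NE}}=\frac{N_mB_i}{N_f\lambda_S^{1/\alpha-1}+N_m}$, $i=1,2$. *)

From Stdlib Require Import Reals.
Open Scope R_scope.

(* Feasible allocation of SP i: macro bandwidth bM, small-cell bandwidth bS,
   total bandwidth Bi, regulatory minimum Bi0. *)
Definition feasible (Bi Bi0 bM bS : R) : Prop :=
  0 <= bM /\ Bi0 <= bS /\ bM + bS <= Bi.

(* Marginal utility u'(r) = r^(-alpha) for u(r) = r^(1-alpha)/(1-alpha).
   (Rpower is only meaningful for r > 0; it only appears multiplied by a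
   bandwidth that is 0 whenever r = 0.) *)
Definition uprime (alpha r : R) : R := Rpower r (- alpha).

Definition RM (R0 Nm bM oM : R) : R := (bM + oM) * R0 / Nm.
Definition RS (R0 lam Nf bS oS : R) : R := lam * (bS + oS) * R0 / Nf.

Definition revenue (R0 lam Nm Nf alpha bM bS oM oS : R) : R :=
  lam * bS * R0 * uprime alpha (RS R0 lam Nf bS oS)
  + bM * R0 * uprime alpha (RM R0 Nm bM oM).

Definition is_NE (R0 lam Nm Nf alpha B1 B2 B10 B20 : R)
    (b1M b1S b2M b2S : R) : Prop :=
  feasible B1 B10 b1M b1S /\ feasible B2 B20 b2M b2S /\
  (forall cM cS, feasible B1 B10 cM cS ->
     revenue R0 lam Nm Nf alpha cM cS b2M b2S
       <= revenue R0 lam Nm Nf alpha b1M b1S b2M b2S) /\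
  (forall cM cS, feasible B2 B20 cM cS ->
     revenue R0 lam Nm Nf alpha cM cS b1M b1S
       <= revenue R0 lam Nm Nf alpha b2M b2S b1M b1S).

Definition BS_NE (lam Nm Nf alpha Bi : R) : R :=
  Nf * Rpower lam (1 / alpha - 1) * Bi / (Nf * Rpower lam (1 / alpha - 1) + Nm).

From Stdlib Require Import Reals Lra.
From Coquelicot Require Import Coquelicot.
Open Scope R_scope.

(* An SP's payoff is a sum of terms x (c (x + o))^(-alpha), concave and increasing in
   its own bandwidth x, so a best response uses all the bandwidth and is characterised
   by the KKT conditions on the marginal gain of shifting bandwidth from the macro cell
   to the small cell.  This gain strictly decreases when the small-cell total and the
   SP's own small-cell share both grow, which rules out two different KKT points.
   For a fixed small-cell total S, the gain of SP i is affine in its share, so its KKT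
   share is a zero of that affine map clamped to [B_i^0, B_i].  The sum of these shares
   is at least S at the unconstrained total S^NE (where shares are proportional to B_i)
   and at most S near S = B1 + B2 (where the macro price explodes); the intermediate
   value theorem yields a fixed point S >= S^NE, which is the equilibrium. *)

Lemma Rpower_pos x y : 0 < Rpower x y.
Proof. apply exp_pos. Qed.

Lemma Rpower_opp_lt a x y : 0 < a -> 0 < x < y -> Rpower y (- a) < Rpower x (- a).
Proof.
  intros Ha Hxy. rewrite !Rpower_Ropp.
  apply Rinv_lt_contravar.
  - apply Rmult_lt_0_compat; apply Rpower_pos.
  - apply Rlt_Rpower_l; lra.
Qed.

Lemma Rpower_opp_le a x y : 0 < a -> 0 < x <= y -> Rpower y (- a) <= Rpower x (- a).
Proof.
  intros Ha [Hx [Hxy | <-]]; [left; apply Rpower_opp_lt |]; lra.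
Qed.

Lemma Rpower_opp_large a c Q : 0 < a -> 0 < c -> 0 < Q ->
  exists T, 0 < T /\ forall t, 0 < t <= T -> Q <= Rpower (c * t) (- a).
Proof.
  intros Ha Hc HQ. exists (Rpower Q (- / a) / c). split.
  - apply Rdiv_lt_0_compat; [apply Rpower_pos | lra].
  - intros t Ht.
    replace Q with (Rpower (c * (Rpower Q (- / a) / c)) (- a)).
    + apply Rpower_opp_le; [lra |]. split; [nra |]. apply Rmult_le_compat_l; lra.
    + replace (c * (Rpower Q (- / a) / c)) with (Rpower Q (- / a)) by (field; lra).
      rewrite Rpower_mult. replace (- / a * - a) with 1 by (field; lra).
      apply Rpower_1; lra.
Qed.

Lemma Rpower_bernoulli_ge b z : b <= 0 -> 0 < z -> 1 + b * (z - 1) <= Rpower z b.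
Proof.
  intros Hb Hz. unfold Rpower.
  assert (Hln : ln z <= z - 1).
  { pose proof (exp_ineq1_le (ln z)) as H. rewrite exp_ln in H; lra. }
  pose proof (exp_ineq1_le (b * ln z)). nra.
Qed.

(* Weighted AM-GM: bound [exp c] and [1] below by the tangents of [exp] at [b c]. *)
Lemma Rpower_bernoulli_le b z : 0 <= b <= 1 -> 0 < z -> Rpower z b <= 1 + b * (z - 1).
Proof.
  intros Hb Hz. unfold Rpower. set (c := ln z). set (e := exp (b * c)).
  assert (He : 0 < e) by apply exp_pos.
  assert (Ez : z = e * exp ((1 - b) * c)).
  { unfold e, c. rewrite <- exp_plus, <- (exp_ln z) at 1 by exact Hz. f_equal. ring. }
  assert (E1 : 1 = e * exp (- (b * c))).
  { unfold e. rewrite <- exp_plus, <- exp_0. f_equal. ring. }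
  pose proof (exp_ineq1_le ((1 - b) * c)) as T1.
  pose proof (exp_ineq1_le (- (b * c))) as T2.
  assert (e * (1 + (1 - b) * c) <= z) by (rewrite Ez; apply Rmult_le_compat_l; lra).
  assert (e * (1 + - (b * c)) <= 1) by (rewrite E1 at 2; apply Rmult_le_compat_l; lra).
  nra.
Qed.

(* [x u'(c (x + o))]: the revenue, divided by [R0], of bandwidth [x] in a tier where
   the competitor holds [o]; [c] turns the tier's total bandwidth into the user rate. *)
Definition band_revenue a c x o := x * Rpower (c * (x + o)) (- a).

Definition marginal_revenue a c x X := Rpower (c * X) (- a) * (1 - a * x / X).

Section BandRevenue.
Variables a c : R.
Hypothesis Ha : 0 < a < 1.
Hypothesis Hc : 0 < c.

Lemma marginal_revenue_pos x X : 0 <= x <= X -> 0 < X -> 0 < marginal_revenue a c x X.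
Proof.
  intros Hx HX. apply Rmult_lt_0_compat; [apply Rpower_pos |].
  replace (1 - a * x / X) with ((X - a * x) / X) by (field; lra).
  apply Rdiv_lt_0_compat; nra.
Qed.

Lemma band_revenue_concave x o y : 0 <= o -> 0 <= x -> 0 < x + o -> 0 <= y ->
  band_revenue a c y o <= band_revenue a c x o + marginal_revenue a c x (x + o) * (y - x).
Proof.
  intros Ho Hx HX Hy. unfold band_revenue, marginal_revenue.
  set (X := x + o) in *. set (p := Rpower (c * X) (- a)).
  assert (Hp : 0 < p) by apply Rpower_pos.
  destruct (Req_dec y 0) as [-> | Hy0].
  - replace (x * p + p * (1 - a * x / X) * (0 - x)) with (p * (a * x * x / X))
      by (field; lra).
    rewrite Rmult_0_l. apply Rmult_le_pos; [lra |].
    apply Rdiv_le_0_compat; nra.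
  - set (z := (y + o) / X).
    assert (Hz : 0 < z) by (apply Rdiv_lt_0_compat; lra).
    assert (Ey : y = z * X - o) by (unfold z; field; lra).
    assert (Ep : Rpower (c * (y + o)) (- a) = p * Rpower z (- a)).
    { unfold p. rewrite Rpower_mult_distr by nra. f_equal. unfold z. field. lra. }
    assert (Ez : z * Rpower z (- a) = Rpower z (1 - a)).
    { replace (1 - a) with (1 + - a) by ring.
      rewrite Rpower_plus, Rpower_1; lra. }
    pose proof (Rpower_bernoulli_ge (- a) z ltac:(lra) Hz) as Hge.
    pose proof (Rpower_bernoulli_le (1 - a) z ltac:(lra) Hz) as Hle.
    (* [y z^(-a) = X z^(1-a) - o z^(-a)], then bound both powers by Bernoulli *)
    assert (y * Rpower z (- a) <= x + (1 - a * x / X) * (y - x)).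
    { replace (y * Rpower z (- a)) with (X * Rpower z (1 - a) - o * Rpower z (- a))
        by (rewrite <- Ez, Ey; ring).
      replace (x + (1 - a * x / X) * (y - x))
        with (X * (1 + (1 - a) * (z - 1)) - o * (1 + - a * (z - 1)))
        by (rewrite Ey; unfold X; field; fold X; lra).
      assert (X * Rpower z (1 - a) <= X * (1 + (1 - a) * (z - 1)))
        by (apply Rmult_le_compat_l; lra).
      assert (o * (1 + - a * (z - 1)) <= o * Rpower z (- a))
        by (apply Rmult_le_compat_l; lra).
      lra. }
    rewrite Ep.
    replace (x * p + p * (1 - a * x / X) * (y - x))
      with (p * (x + (1 - a * x / X) * (y - x))) by ring.
    replace (y * (p * Rpower z (- a))) with (p * (y * Rpower z (- a))) by ring.
    apply Rmult_le_compat_l; lra.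
Qed.

Lemma band_revenue_increasing x y o : 0 <= o -> 0 <= x < y ->
  band_revenue a c x o < band_revenue a c y o.
Proof.
  intros Ho Hxy.
  pose proof (band_revenue_concave y o x Ho ltac:(lra) ltac:(lra) ltac:(lra)).
  assert (0 < marginal_revenue a c y (y + o)) by (apply marginal_revenue_pos; lra).
  nra.
Qed.

Lemma band_revenue_derive x o d : 0 < x + o ->
  derivable_pt_lim (fun t => band_revenue a c (x + d * t) o) 0
    (d * marginal_revenue a c x (x + o)).
Proof.
  intros HX. apply is_derive_Reals. unfold band_revenue, marginal_revenue, Rpower.
  auto_derive.
  - rewrite Rmult_0_r, Rplus_0_r. nra.
  - rewrite Rmult_0_r, Rplus_0_r. field. split; [lra |]. apply Rgt_not_eq. nra.
Qed.

Lemma marginal_revenue_le x X x' X' : 0 < X <= X' -> x / X <= x' / X' <= 1 ->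
  marginal_revenue a c x' X' <= marginal_revenue a c x X.
Proof.
  intros HX Hr. unfold marginal_revenue.
  assert (Rpower (c * X') (- a) <= Rpower (c * X) (- a)).
  { apply Rpower_opp_le; [lra |]. split; [nra |]. apply Rmult_le_compat_l; lra. }
  rewrite <- !Rmult_div_assoc.
  apply Rle_trans with (Rpower (c * X) (- a) * (1 - a * (x' / X'))).
  - apply Rmult_le_compat_r; nra.
  - apply Rmult_le_compat_l; [left; apply Rpower_pos | nra].
Qed.

Lemma marginal_revenue_lt x X x' X' : 0 < X <= X' -> x / X <= x' / X' <= 1 ->
  X < X' \/ x / X < x' / X' ->
  marginal_revenue a c x' X' < marginal_revenue a c x X.
Proof.
  intros HX Hr [HXX | Hrr]; unfold marginal_revenue; rewrite <- !Rmult_div_assoc.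
  - assert (Rpower (c * X') (- a) < Rpower (c * X) (- a)).
    { apply Rpower_opp_lt; [lra |]. split; [nra |]. apply Rmult_lt_compat_l; lra. }
    apply Rlt_le_trans with (Rpower (c * X) (- a) * (1 - a * (x' / X'))).
    + apply Rmult_lt_compat_r; nra.
    + apply Rmult_le_compat_l; [left; apply Rpower_pos | nra].
  - assert (Rpower (c * X') (- a) <= Rpower (c * X) (- a)).
    { apply Rpower_opp_le; [lra |]. split; [nra |]. apply Rmult_le_compat_l; lra. }
    apply Rle_lt_trans with (Rpower (c * X) (- a) * (1 - a * (x' / X'))).
    + apply Rmult_le_compat_r; nra.
    + apply Rmult_lt_compat_l; [apply Rpower_pos | nra].
Qed.

End BandRevenue.

Lemma derivable_pt_lim_right_max h l d : derivable_pt_lim h 0 l -> 0 < d ->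
  (forall t, 0 < t < d -> h t <= h 0) -> l <= 0.
Proof.
  intros Hd Hdpos Hmax. destruct (Rle_lt_dec l 0) as [| Hl]; [assumption | exfalso].
  destruct (Hd l Hl) as [del Hdel].
  set (t := Rmin d del / 2).
  assert (Ht : 0 < t < d /\ t < del).
  { pose proof (cond_pos del). pose proof (Rmin_l d del). pose proof (Rmin_r d del).
    unfold t. repeat split; try lra. apply Rmin_case; lra. }
  specialize (Hdel t ltac:(lra) ltac:(rewrite Rabs_right; lra)).
  rewrite Rplus_0_l in Hdel. apply Rabs_def2 in Hdel.
  specialize (Hmax t ltac:(lra)).
  assert (h t - h 0 = (h t - h 0) / t * t) by (field; lra).
  nra.
Qed.

Lemma Rdiv_le_1 x X : 0 < X -> x <= X -> x / X <= 1.
Proof.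
  intros HX Hx. replace (x / X) with (1 - (X - x) / X) by (field; lra).
  enough (0 <= (X - x) / X) by lra. apply Rdiv_le_0_compat; lra.
Qed.

Lemma share_le s S s' S' : 0 <= s <= S -> 0 < S <= S' -> S' - S <= s' - s ->
  s / S <= s' / S'.
Proof.
  intros Hs HS Hgrowth.
  replace (s' / S') with (s / S + ((s' - s) * S - s * (S' - S)) / (S * S'))
    by (field; lra).
  enough (0 <= ((s' - s) * S - s * (S' - S)) / (S * S')) by lra.
  apply Rdiv_le_0_compat; nra.
Qed.

Definition clamp lo hi x := Rmin hi (Rmax lo x).

Lemma clamp_bounds lo hi x : lo <= hi -> lo <= clamp lo hi x <= hi.
Proof. unfold clamp, Rmin, Rmax. repeat destruct Rle_dec; lra. Qed.

Lemma clamp_ge lo hi x : x <= hi -> x <= clamp lo hi x.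
Proof. unfold clamp, Rmin, Rmax. repeat destruct Rle_dec; lra. Qed.

Lemma clamp_le_max lo hi x : clamp lo hi x <= Rmax lo x.
Proof. apply Rmin_r. Qed.

Lemma clamp_lt_hi lo hi x : clamp lo hi x < hi -> x <= clamp lo hi x.
Proof. unfold clamp, Rmin, Rmax. repeat destruct Rle_dec; lra. Qed.

Lemma clamp_gt_lo lo hi x : lo < clamp lo hi x -> clamp lo hi x <= x.
Proof. unfold clamp, Rmin, Rmax. repeat destruct Rle_dec; lra. Qed.

Lemma clamp_lipschitz lo hi x y : Rabs (clamp lo hi x - clamp lo hi y) <= Rabs (x - y).
Proof.
  unfold clamp, Rmin, Rmax.
  repeat destruct Rle_dec; unfold Rabs; repeat destruct Rcase_abs; lra.
Qed.

Lemma continuous_clamp lo hi x : continuous (clamp lo hi) x.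
Proof.
  apply continuity_pt_filterlim. intros eps Heps. exists eps. split; [exact Heps |].
  intros y [_ Hy]. simpl in *. unfold R_dist in *.
  eapply Rle_lt_trans; [apply clamp_lipschitz | exact Hy].
Qed.

Lemma IVT_le (f : R -> R) lo hi : lo <= hi ->
  (forall x, lo <= x <= hi -> continuous f x) -> 0 <= f lo -> f hi <= 0 ->
  exists z, lo <= z <= hi /\ f z = 0.
Proof.
  intros Hle Hcont Hlo Hhi.
  destruct (Req_dec (f lo) 0) as [E | Elo]; [exists lo; split; [lra | exact E] |].
  destruct (Req_dec (f hi) 0) as [E | Ehi]; [exists hi; split; [lra | exact E] |].
  destruct (Ranalysis5.IVT_interv (fun x => - f x) lo hi) as (z & Hz & Ez).
  - intros x Hx. apply continuity_pt_filterlim, (continuous_opp f), Hcont, Hx.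
  - destruct Hle as [| E]; [assumption | subst; lra].
  - lra.
  - lra.
  - exists z. split; [exact Hz | lra].
Qed.

Section Game.
Variables a lam cS cM : R.
Hypothesis Ha : 0 < a < 1.
Hypothesis Hlam : 1 < lam.
Hypothesis HcS : 0 < cS.
Hypothesis HcM : 0 < cM.

Definition payoff m s om os := lam * band_revenue a cS s os + band_revenue a cM m om.

Definition best_response B B0 m s om os :=
  forall m' s', feasible B B0 m' s' -> payoff m' s' om os <= payoff m s om os.

Definition equilibrium B1 B2 B10 B20 m1 s1 m2 s2 :=
  feasible B1 B10 m1 s1 /\ feasible B2 B20 m2 s2 /\
  best_response B1 B10 m1 s1 m2 s2 /\ best_response B2 B20 m2 s2 m1 s1.

(* Marginal gain of moving bandwidth from the macro cell to the small cell. *)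
Definition shift_gain S s m M := lam * marginal_revenue a cS s S - marginal_revenue a cM m M.

(* The Karush-Kuhn-Tucker conditions of an SP using all of its bandwidth [B]. *)
Definition first_order_optimal B B0 s S M :=
  (s < B -> shift_gain S s (B - s) M <= 0) /\ (B0 < s -> 0 <= shift_gain S s (B - s) M).

Lemma best_response_exhausts B B0 m s om os :
  feasible B B0 m s -> 0 <= om -> best_response B B0 m s om os -> m + s = B.
Proof.
  intros (Hm & Hs & HmB) Hom Hbr.
  destruct (Req_dec (m + s) B) as [| Hne]; [assumption | exfalso].
  specialize (Hbr (B - s) s ltac:(unfold feasible; lra)).
  pose proof (band_revenue_increasing a cM Ha HcM m (B - s) om Hom ltac:(lra)).
  unfold payoff in Hbr. lra.
Qed.

Lemma payoff_shift_derive m s om os d : 0 < s + os -> 0 < m + om ->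
  derivable_pt_lim (fun t => payoff (m + - d * t) (s + d * t) om os) 0
    (d * shift_gain (s + os) s m (m + om)).
Proof.
  intros HS HM. unfold payoff.
  replace (d * shift_gain (s + os) s m (m + om))
    with (lam * (d * marginal_revenue a cS s (s + os))
          + - d * marginal_revenue a cM m (m + om)) by (unfold shift_gain; ring).
  apply derivable_pt_lim_plus.
  - apply derivable_pt_lim_scal, band_revenue_derive; lra.
  - apply band_revenue_derive; lra.
Qed.

Lemma best_response_first_order_optimal B B0 s om os :
  feasible B B0 (B - s) s -> 0 < s + os -> 0 < B - s + om ->
  best_response B B0 (B - s) s om os -> first_order_optimal B B0 s (s + os) (B - s + om).
Proof.
  intros (Hm & Hs & _) HS HM Hbr.
  assert (Hdir : forall d delta, 0 < delta ->
    (forall t, 0 < t < delta -> feasible B B0 (B - s + - d * t) (s + d * t)) ->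
    d * shift_gain (s + os) s (B - s) (B - s + om) <= 0).
  { intros d delta Hdelta Hfeas.
    apply (derivable_pt_lim_right_max _ _ delta
             (payoff_shift_derive (B - s) s om os d HS HM) Hdelta).
    intros t Ht.
    replace (B - s + - d * 0) with (B - s) by ring. replace (s + d * 0) with s by ring.
    apply Hbr, Hfeas, Ht. }
  split; intro Hlt.
  - enough (1 * shift_gain (s + os) s (B - s) (B - s + om) <= 0) by lra.
    apply (Hdir 1 (B - s)); [lra |]. intros t Ht. unfold feasible. lra.
  - enough (-1 * shift_gain (s + os) s (B - s) (B - s + om) <= 0) by lra.
    apply (Hdir (-1) (s - B0)); [lra |]. intros t Ht. unfold feasible. lra.
Qed.

(* Concavity: the payoff lies below its tangent plane, whose slope along
   feasible directions is [shift_gain] times the change of [s]. *)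
Lemma best_response_of_first_order_optimal B B0 s om os : 0 <= B0 ->
  feasible B B0 (B - s) s -> 0 <= om -> 0 <= os -> 0 < s + os -> 0 < B - s + om ->
  first_order_optimal B B0 s (s + os) (B - s + om) -> best_response B B0 (B - s) s om os.
Proof.
  intros HB0 (Hm & Hs & _) Hom Hos HS HM [Hup Hdown] m' s' (Hm' & Hs' & HmB').
  pose proof (band_revenue_concave a cS Ha HcS s os s' Hos ltac:(lra) HS ltac:(lra)) as TS.
  pose proof (band_revenue_concave a cM Ha HcM (B - s) om m' Hom Hm HM Hm') as TM.
  set (gS := marginal_revenue a cS s (s + os)) in *.
  set (gM := marginal_revenue a cM (B - s) (B - s + om)) in *.
  assert (HgM : 0 < gM) by (apply marginal_revenue_pos; lra).
  assert (Hlin : lam * gS * (s' - s) + gM * (m' - (B - s)) <= 0).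
  { assert (gM * (m' - (B - s)) <= gM * (s - s')) by (apply Rmult_le_compat_l; lra).
    change (shift_gain (s + os) s (B - s) (B - s + om)) with (lam * gS - gM) in Hup, Hdown.
    destruct (Rtotal_order s s') as [Hlt | [<- | Hgt]].
    - specialize (Hup ltac:(lra)). nra.
    - lra.
    - specialize (Hdown ltac:(lra)). nra. }
  unfold payoff. nra.
Qed.

Lemma best_response_small_pos B B0 m s om : 0 < B -> 0 <= B0 ->
  feasible B B0 m s -> 0 <= om -> best_response B B0 m s om 0 -> 0 < s.
Proof.
  intros HB HB0 Hf Hom Hbr.
  pose proof (best_response_exhausts B B0 m s om 0 Hf Hom Hbr) as Hfull.
  destruct Hf as (Hm & Hs & _).
  destruct (Rlt_le_dec 0 s) as [| Hs0]; [assumption | exfalso].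
  assert (s = 0) as -> by lra.
  set (pM := Rpower (cM * (m + om)) (- a)).
  destruct (Rpower_opp_large a cS pM ltac:(lra) HcS (Rpower_pos _ _)) as (T & HT & Hlarge).
  set (t := Rmin (m / 2) T).
  assert (Ht : 0 < t <= m / 2 /\ t <= T).
  { unfold t. split; [split |]; [apply Rmin_case | apply Rmin_l | apply Rmin_r]; lra. }
  specialize (Hlarge t ltac:(lra)).
  assert (pM <= Rpower (cM * (m - t + om)) (- a)).
  { apply Rpower_opp_le; [lra |]. split; [nra |]. apply Rmult_le_compat_l; lra. }
  specialize (Hbr (m - t) t ltac:(unfold feasible; lra)).
  unfold payoff, band_revenue in Hbr. rewrite !Rplus_0_r, Rmult_0_l in Hbr. fold pM in Hbr.
  (* moving [t] to the small cell earns at least [lam t pM] and loses at most [t pM] *)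
  assert (lam * (t * pM) <= lam * (t * Rpower (cS * t) (- a))).
  { apply Rmult_le_compat_l; [lra |]. apply Rmult_le_compat_l; lra. }
  assert ((m - t) * pM <= (m - t) * Rpower (cM * (m - t + om)) (- a)).
  { apply Rmult_le_compat_l; lra. }
  assert (0 < (lam - 1) * t * pM).
  { apply Rmult_lt_0_compat; [| apply Rpower_pos]. nra. }
  lra.
Qed.

Lemma best_response_macro_pos B B0 m s os : 0 <= B0 < B ->
  feasible B B0 m s -> 0 <= os -> best_response B B0 m s 0 os -> 0 < m.
Proof.
  intros HB0 Hf Hos Hbr.
  pose proof (best_response_exhausts B B0 m s 0 os Hf (Rle_refl 0) Hbr) as Hfull.
  destruct Hf as (Hm & Hs & _).
  destruct (Rlt_le_dec 0 m) as [| Hm0]; [assumption | exfalso].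
  assert (m = 0) as -> by lra.
  set (pS := Rpower (cS * (s + os)) (- a)).
  assert (HpS : 0 < pS) by apply Rpower_pos.
  destruct (Rpower_opp_large a cM (2 * lam * pS) ltac:(lra) HcM ltac:(nra))
    as (T & HT & Hlarge).
  set (t := Rmin ((s - B0) / 2) T).
  assert (Ht : 0 < t <= (s - B0) / 2 /\ t <= T).
  { unfold t. split; [split |]; [apply Rmin_case | apply Rmin_l | apply Rmin_r]; lra. }
  specialize (Hlarge t ltac:(lra)).
  assert (pS <= Rpower (cS * (s - t + os)) (- a)).
  { apply Rpower_opp_le; [lra |]. split; [nra |]. apply Rmult_le_compat_l; lra. }
  specialize (Hbr t (s - t) ltac:(unfold feasible; lra)).
  unfold payoff, band_revenue in Hbr. rewrite !Rplus_0_r, Rmult_0_l in Hbr. fold pS in Hbr.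
  (* moving [t] to the macro cell earns at least [2 lam t pS] and loses at most [lam t pS] *)
  assert (t * (2 * lam * pS) <= t * Rpower (cM * t) (- a)).
  { apply Rmult_le_compat_l; lra. }
  assert (lam * ((s - t) * pS) <= lam * ((s - t) * Rpower (cS * (s - t + os)) (- a))).
  { apply Rmult_le_compat_l; [lra |]. apply Rmult_le_compat_l; lra. }
  assert (0 < lam * t * pS) by (apply Rmult_lt_0_compat; nra).
  lra.
Qed.

Definition stationary B1 B2 B10 B20 s1 s2 :=
  B10 <= s1 <= B1 /\ B20 <= s2 <= B2 /\ 0 < s1 + s2 < B1 + B2 /\
  first_order_optimal B1 B10 s1 (s1 + s2) (B1 + B2 - (s1 + s2)) /\
  first_order_optimal B2 B20 s2 (s1 + s2) (B1 + B2 - (s1 + s2)).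

Lemma equilibrium_stationary B1 B2 B10 B20 m1 s1 m2 s2 :
  0 < B1 -> 0 < B2 -> 0 <= B10 -> 0 <= B20 -> B10 < B1 \/ B20 < B2 ->
  equilibrium B1 B2 B10 B20 m1 s1 m2 s2 ->
  m1 = B1 - s1 /\ m2 = B2 - s2 /\ stationary B1 B2 B10 B20 s1 s2.
Proof.
  intros HB1 HB2 HB10 HB20 Hnd (F1 & F2 & BR1 & BR2).
  pose proof F1 as (Hm1 & Hs1 & _). pose proof F2 as (Hm2 & Hs2 & _).
  pose proof (best_response_exhausts _ _ _ _ _ _ F1 Hm2 BR1) as E1.
  pose proof (best_response_exhausts _ _ _ _ _ _ F2 Hm1 BR2) as E2.
  assert (HS : 0 < s1 + s2).
  { destruct (Rlt_le_dec 0 (s1 + s2)) as [| HS]; [assumption | exfalso].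
    assert (s2 = 0) as -> by lra.
    pose proof (best_response_small_pos _ _ _ _ _ HB1 HB10 F1 Hm2 BR1). lra. }
  assert (HM : 0 < m1 + m2).
  { destruct (Rlt_le_dec 0 (m1 + m2)) as [| HM]; [assumption | exfalso].
    assert (m1 = 0) as -> by lra. assert (m2 = 0) as -> by lra.
    destruct Hnd as [Hnd | Hnd].
    - pose proof (best_response_macro_pos B1 B10 0 s1 s2 (conj HB10 Hnd) F1 ltac:(lra) BR1). lra.
    - pose proof (best_response_macro_pos B2 B20 0 s2 s1 (conj HB20 Hnd) F2 ltac:(lra) BR2). lra. }
  assert (Em1 : m1 = B1 - s1) by lra. assert (Em2 : m2 = B2 - s2) by lra.
  subst m1 m2. split; [reflexivity | split; [reflexivity |]].
  assert (EM : B1 + B2 - (s1 + s2) = B1 - s1 + (B2 - s2)) by ring.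
  do 3 (split; [lra |]). rewrite EM. split.
  - apply best_response_first_order_optimal; assumption.
  - rewrite (Rplus_comm s1 s2), (Rplus_comm (B1 - s1)).
    apply best_response_first_order_optimal; try assumption; lra.
Qed.

Lemma shift_gain_sum S s1 s2 M m1 m2 : s1 + s2 = S -> m1 + m2 = M -> 0 < S -> 0 < M ->
  shift_gain S s1 m1 M + shift_gain S s2 m2 M
  = (2 - a) * (lam * Rpower (cS * S) (- a) - Rpower (cM * M) (- a)).
Proof.
  intros <- <- HS HM. unfold shift_gain, marginal_revenue. field. lra.
Qed.

Lemma shift_gain_lt B Bi S S' s s' :
  0 < S <= S' -> S' < B -> 0 <= s < s' -> s <= S -> s' <= S' -> S' - S <= s' - s ->
  Bi - s <= B - S -> 0 <= Bi - s' <= B - S' ->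
  shift_gain S' s' (Bi - s') (B - S') < shift_gain S s (Bi - s) (B - S).
Proof.
  intros HS HS'B Hs HsS Hs'S' Hgrowth Hm Hm'.
  unfold shift_gain.
  assert (marginal_revenue a cM (Bi - s) (B - S) <= marginal_revenue a cM (Bi - s') (B - S')).
  { apply marginal_revenue_le; try lra.
    split.
    - apply share_le; lra.
    - apply Rdiv_le_1; lra. }
  enough (marginal_revenue a cS s' S' < marginal_revenue a cS s S) by nra.
  apply marginal_revenue_lt; try lra.
  - split; [apply share_le | apply Rdiv_le_1]; lra.
  - destruct (Rlt_le_dec S S') as [| HSS]; [left; assumption | right].
    assert (S' = S) as -> by lra.
    unfold Rdiv. apply Rmult_lt_compat_r; [apply Rinv_0_lt_compat |]; lra.
Qed.

Lemma stationary_unique_le B1 B2 B10 B20 s1 s2 s1' s2' : 0 <= B10 -> 0 <= B20 ->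
  stationary B1 B2 B10 B20 s1 s2 -> stationary B1 B2 B10 B20 s1' s2' ->
  s1 + s2 <= s1' + s2' -> s1 = s1' /\ s2 = s2'.
Proof.
  intros HB10 HB20 (H1 & H2 & HS & [Up1 Down1] & [Up2 Down2])
    (H1' & H2' & HS' & [Up1' Down1'] & [Up2' Down2']) Hle.
  set (B := B1 + B2) in *.
  destruct (Rlt_le_dec s1 s1') as [L1 | L1]; destruct (Rlt_le_dec s2 s2') as [L2 | L2].
  - exfalso.
    (* both shares grow, so compare the sums of the gains, which depend on the totals only *)
    specialize (Up1 ltac:(lra)). specialize (Up2 ltac:(lra)).
    specialize (Down1' ltac:(lra)). specialize (Down2' ltac:(lra)).
    assert (Old : shift_gain (s1 + s2) s1 (B1 - s1) (B - (s1 + s2))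
                  + shift_gain (s1 + s2) s2 (B2 - s2) (B - (s1 + s2)) <= 0) by lra.
    assert (New : 0 <= shift_gain (s1' + s2') s1' (B1 - s1') (B - (s1' + s2'))
                       + shift_gain (s1' + s2') s2' (B2 - s2') (B - (s1' + s2'))) by lra.
    rewrite shift_gain_sum in Old, New by (unfold B in *; lra).
    assert (Rpower (cS * (s1' + s2')) (- a) < Rpower (cS * (s1 + s2)) (- a)).
    { apply Rpower_opp_lt; [lra |]. split; [nra |]. apply Rmult_lt_compat_l; lra. }
    assert (Rpower (cM * (B - (s1 + s2))) (- a) < Rpower (cM * (B - (s1' + s2'))) (- a)).
    { apply Rpower_opp_lt; [lra |]. split; [nra |]. apply Rmult_lt_compat_l; lra. }
    assert (lam * Rpower (cS * (s1' + s2')) (- a) < lam * Rpower (cS * (s1 + s2)) (- a))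
      by (apply Rmult_lt_compat_l; lra).
    assert (0 < 2 - a) by lra.
    nra.
  - exfalso.
    specialize (Up1 ltac:(lra)). specialize (Down1' ltac:(lra)).
    enough (shift_gain (s1' + s2') s1' (B1 - s1') (B - (s1' + s2'))
            < shift_gain (s1 + s2) s1 (B1 - s1) (B - (s1 + s2))) by lra.
    apply shift_gain_lt; unfold B in *; lra.
  - exfalso.
    specialize (Up2 ltac:(lra)). specialize (Down2' ltac:(lra)).
    enough (shift_gain (s1' + s2') s2' (B2 - s2') (B - (s1' + s2'))
            < shift_gain (s1 + s2) s2 (B2 - s2) (B - (s1 + s2))) by lra.
    apply shift_gain_lt; unfold B in *; lra.
  - split; lra.
Qed.

Lemma stationary_equilibrium B1 B2 B10 B20 s1 s2 : 0 <= B10 -> 0 <= B20 ->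
  stationary B1 B2 B10 B20 s1 s2 -> equilibrium B1 B2 B10 B20 (B1 - s1) s1 (B2 - s2) s2.
Proof.
  intros HB10 HB20 (H1 & H2 & HS & FO1 & FO2).
  assert (EM : B1 + B2 - (s1 + s2) = B1 - s1 + (B2 - s2)) by ring.
  rewrite EM in FO1, FO2.
  split; [unfold feasible; lra | split; [unfold feasible; lra | split]].
  - apply best_response_of_first_order_optimal; try (unfold feasible; lra). exact FO1.
  - rewrite (Rplus_comm s1 s2), (Rplus_comm (B1 - s1)) in FO2.
    apply best_response_of_first_order_optimal; try (unfold feasible; lra). exact FO2.
Qed.

Definition shift_gain_slope B S :=
  a * (lam * Rpower (cS * S) (- a) / S + Rpower (cM * (B - S)) (- a) / (B - S)).

(* The zero of the affine map [s |-> shift_gain S s (Bi - s) (B - S)]. *)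
Definition interior_share B Bi S := shift_gain S 0 Bi (B - S) / shift_gain_slope B S.

Definition share_response B Bi Bi0 S := clamp Bi0 Bi (interior_share B Bi S).

Lemma shift_gain_slope_pos B S : 0 < S < B -> 0 < shift_gain_slope B S.
Proof.
  intros HS. unfold shift_gain_slope.
  pose proof (Rpower_pos (cS * S) (- a)). pose proof (Rpower_pos (cM * (B - S)) (- a)).
  apply Rmult_lt_0_compat; [lra |].
  apply Rplus_lt_0_compat; apply Rdiv_lt_0_compat; nra.
Qed.

Lemma shift_gain_interior_share B Bi S s : 0 < S < B ->
  shift_gain S s (Bi - s) (B - S) = shift_gain_slope B S * (interior_share B Bi S - s).
Proof.
  intros HS. pose proof (shift_gain_slope_pos B S HS).
  unfold interior_share. field_simplify; [| lra].
  unfold shift_gain, shift_gain_slope, marginal_revenue. field. lra.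
Qed.

Lemma interior_share_le B Bi S s : 0 < S < B ->
  shift_gain S s (Bi - s) (B - S) <= 0 -> interior_share B Bi S <= s.
Proof.
  intros HS Hg. rewrite shift_gain_interior_share in Hg by exact HS.
  pose proof (shift_gain_slope_pos B S HS). nra.
Qed.

Lemma share_response_first_order B Bi Bi0 S : Bi0 <= Bi -> 0 < S < B ->
  first_order_optimal Bi Bi0 (share_response B Bi Bi0 S) S (B - S).
Proof.
  intros HBi HS. unfold first_order_optimal, share_response.
  rewrite shift_gain_interior_share by exact HS.
  pose proof (shift_gain_slope_pos B S HS).
  split; intro Hclamp.
  - pose proof (clamp_lt_hi _ _ _ Hclamp). nra.
  - pose proof (clamp_gt_lo _ _ _ Hclamp). nra.
Qed.

Lemma stationary_of_fixed_total B1 B2 B10 B20 S : B10 <= B1 -> B20 <= B2 ->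
  0 < S < B1 + B2 ->
  share_response (B1 + B2) B1 B10 S + share_response (B1 + B2) B2 B20 S = S ->
  stationary B1 B2 B10 B20
    (share_response (B1 + B2) B1 B10 S) (share_response (B1 + B2) B2 B20 S).
Proof.
  intros HB1 HB2 HS Hfix. unfold stationary. rewrite Hfix.
  pose proof (clamp_bounds B10 B1 (interior_share (B1 + B2) B1 S) HB1).
  pose proof (clamp_bounds B20 B2 (interior_share (B1 + B2) B2 S) HB2).
  unfold share_response in *.
  repeat split; try lra; apply share_response_first_order; assumption.
Qed.

(* The total small-cell bandwidth of the unconstrained equilibrium: it solves
   [lam (cS S)^(-a) = (cM (B - S))^(-a)]. *)
Definition balanced_total B :=
  B * (Rpower lam (/ a) * cM) / (Rpower lam (/ a) * cM + cS).

Lemma balanced_total_spec B : 0 < B ->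
  0 < balanced_total B < B /\
  lam * Rpower (cS * balanced_total B) (- a) = Rpower (cM * (B - balanced_total B)) (- a).
Proof.
  intros HB. unfold balanced_total. set (L := Rpower lam (/ a)).
  assert (HL : 0 < L) by apply Rpower_pos.
  assert (HLc : 0 < L * cM) by nra.
  split; [split |].
  - apply Rdiv_lt_0_compat; nra.
  - apply (Rmult_lt_reg_r (L * cM + cS)); [lra |].
    replace (B * (L * cM) / (L * cM + cS) * (L * cM + cS)) with (B * (L * cM)) by (field; lra).
    nra.
  - set (Y := B * cM * cS / (L * cM + cS)).
    assert (HY : 0 < Y) by (apply Rdiv_lt_0_compat; [repeat apply Rmult_lt_0_compat |]; lra).
    replace (cS * (B * (L * cM) / (L * cM + cS))) with (L * Y) by (unfold Y; field; lra).
    replace (cM * (B - B * (L * cM) / (L * cM + cS))) with Y by (unfold Y; field; lra).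
    rewrite <- Rpower_mult_distr by assumption.
    unfold L. rewrite Rpower_mult. replace (/ a * - a) with (- (1)) by (field; lra).
    rewrite Rpower_Ropp, Rpower_1 by lra. field. lra.
Qed.

Lemma interior_share_balanced B Bi : 0 < B ->
  interior_share B Bi (balanced_total B) = Bi * balanced_total B / B.
Proof.
  intros HB. destruct (balanced_total_spec B HB) as [HS Hbal].
  set (S := balanced_total B) in *.
  assert (Hzero : shift_gain S (Bi * S / B) (Bi - Bi * S / B) (B - S) = 0).
  { unfold shift_gain, marginal_revenue. rewrite <- Rmult_assoc, Hbal. field. lra. }
  rewrite shift_gain_interior_share in Hzero by exact HS.
  pose proof (shift_gain_slope_pos B S HS).
  apply Rmult_integral in Hzero as [| ]; lra.
Qed.

(* Once the macro price [(cM M)^(-a)] dominates the small-cell price, each SP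
   wants at least the whole remaining macro bandwidth [M] in its macro cell. *)
Lemma interior_share_le_near_full B Bi M : 0 <= Bi -> 0 < M <= B / 2 ->
  2 * lam * Rpower (cS * (B - M)) (- a) <= (1 - a) * Rpower (cM * M) (- a) ->
  interior_share B Bi (B - M) <= Bi - M.
Proof.
  intros HBi HM Hprice.
  apply interior_share_le; [lra |]. replace (B - (B - M)) with M by ring.
  unfold shift_gain, marginal_revenue.
  replace (1 - a * (Bi - (Bi - M)) / M) with (1 - a) by (field; lra).
  assert (Hshare : 1 - a * (Bi - M) / (B - M) <= 2).
  { enough (a * (M - Bi) / (B - M) <= 1) by (unfold Rdiv in *; lra).
    apply Rdiv_le_1; [lra |]. nra. }
  assert (lam * (Rpower (cS * (B - M)) (- a) * (1 - a * (Bi - M) / (B - M)))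
          <= lam * (Rpower (cS * (B - M)) (- a) * 2)).
  { apply Rmult_le_compat_l; [lra |].
    apply Rmult_le_compat_l; [left; apply Rpower_pos | exact Hshare]. }
  lra.
Qed.

Lemma share_responses_below B1 B2 B10 B20 Smin : 0 <= B10 <= B1 -> 0 <= B20 <= B2 ->
  B10 + B20 < B1 + B2 -> Smin < B1 + B2 ->
  exists S, Smin <= S < B1 + B2 /\
    share_response (B1 + B2) B1 B10 S + share_response (B1 + B2) B2 B20 S <= S.
Proof.
  intros HB1 HB2 Hnd HSmin. set (B := B1 + B2) in *.
  set (P0 := Rpower (cS * (B / 2)) (- a)).
  assert (HP0 : 0 < P0) by apply Rpower_pos.
  destruct (Rpower_opp_large a cM (2 * lam * P0 / (1 - a)) ltac:(lra) HcM)
    as (T & HT & Hlarge).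
  { apply Rdiv_lt_0_compat; nra. }
  set (M := Rmin (Rmin (B - B10 - B20) (B / 2)) (Rmin T (B - Smin))).
  assert (HM : 0 < M /\ M <= B - B10 - B20 /\ M <= B / 2 /\ M <= T /\ M <= B - Smin).
  { unfold M. pose proof (Rmin_l (B - B10 - B20) (B / 2)).
    pose proof (Rmin_r (B - B10 - B20) (B / 2)). pose proof (Rmin_l T (B - Smin)).
    pose proof (Rmin_r T (B - Smin)).
    pose proof (Rmin_l (Rmin (B - B10 - B20) (B / 2)) (Rmin T (B - Smin))).
    pose proof (Rmin_r (Rmin (B - B10 - B20) (B / 2)) (Rmin T (B - Smin))).
    repeat split; try lra. repeat apply Rmin_case; lra. }
  exists (B - M). split; [lra |].
  assert (Hprice : 2 * lam * Rpower (cS * (B - M)) (- a) <= (1 - a) * Rpower (cM * M) (- a)).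
  { specialize (Hlarge M ltac:(lra)).
    assert (Rpower (cS * (B - M)) (- a) <= P0).
    { apply Rpower_opp_le; [lra |]. split; [nra |]. apply Rmult_le_compat_l; lra. }
    apply Rle_trans with ((1 - a) * (2 * lam * P0 / (1 - a))).
    - replace ((1 - a) * (2 * lam * P0 / (1 - a))) with (2 * lam * P0) by (field; lra). nra.
    - apply Rmult_le_compat_l; lra. }
  assert (Hresp : forall Bi Bi0, 0 <= Bi ->
    share_response B Bi Bi0 (B - M) <= Rmax Bi0 (Bi - M)).
  { intros Bi Bi0 HBi. eapply Rle_trans; [apply clamp_le_max | apply Rle_max_compat_l].
    apply interior_share_le_near_full; lra. }
  pose proof (Hresp B1 B10 ltac:(lra)). pose proof (Hresp B2 B20 ltac:(lra)).
  unfold Rmax in *. destruct (Rle_dec B10 (B1 - M)); destruct (Rle_dec B20 (B2 - M));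
    unfold B in *; lra.
Qed.

Lemma share_response_continuous B Bi Bi0 S : 0 < S < B ->
  continuous (share_response B Bi Bi0) S.
Proof.
  intros HS. apply (continuous_comp (interior_share B Bi) (clamp Bi0 Bi));
    [| apply continuous_clamp].
  pose proof (shift_gain_slope_pos B S HS) as Hslope.
  apply (ex_derive_continuous (V := R_NormedModule)).
  unfold interior_share, shift_gain, shift_gain_slope, marginal_revenue, Rpower in *.
  auto_derive. repeat split; try apply Rmult_lt_0_compat; try lra.
  unfold Rminus, Rdiv in Hslope. lra.
Qed.

Lemma share_responses_above_balanced B1 B2 B10 B20 : 0 <= B10 <= B1 -> 0 <= B20 <= B2 ->
  0 < B1 + B2 ->
  balanced_total (B1 + B2) <=
  share_response (B1 + B2) B1 B10 (balanced_total (B1 + B2))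
  + share_response (B1 + B2) B2 B20 (balanced_total (B1 + B2)).
Proof.
  intros HB1 HB2 HB. destruct (balanced_total_spec (B1 + B2) HB) as [Hbal _].
  unfold share_response. rewrite !interior_share_balanced by exact HB.
  set (Sb := balanced_total (B1 + B2)) in *.
  assert (Hprop : forall Bi, 0 <= Bi -> Bi * Sb / (B1 + B2) <= Bi).
  { intros Bi HBi. apply (Rmult_le_reg_r (B1 + B2)); [lra |].
    replace (Bi * Sb / (B1 + B2) * (B1 + B2)) with (Bi * Sb) by (field; lra). nra. }
  pose proof (clamp_ge B10 B1 _ (Hprop B1 ltac:(lra))).
  pose proof (clamp_ge B20 B2 _ (Hprop B2 ltac:(lra))).
  assert (B1 * Sb / (B1 + B2) + B2 * Sb / (B1 + B2) = Sb) by (field; lra).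
  lra.
Qed.

Lemma stationary_exists B1 B2 B10 B20 : 0 <= B10 <= B1 -> 0 <= B20 <= B2 ->
  B10 + B20 < B1 + B2 ->
  exists s1 s2, stationary B1 B2 B10 B20 s1 s2 /\ balanced_total (B1 + B2) <= s1 + s2.
Proof.
  intros HB1 HB2 Hnd.
  destruct (balanced_total_spec (B1 + B2) ltac:(lra)) as [Hbal _].
  destruct (share_responses_below B1 B2 B10 B20 (balanced_total (B1 + B2)) HB1 HB2 Hnd
              (proj2 Hbal)) as (Shi & HShi & Hbelow).
  pose proof (share_responses_above_balanced B1 B2 B10 B20 HB1 HB2 ltac:(lra)) as Habove.
  set (r1 := share_response (B1 + B2) B1 B10) in *.
  set (r2 := share_response (B1 + B2) B2 B20) in *.
  assert (Hcont : forall x, balanced_total (B1 + B2) <= x <= Shi ->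
    continuous (fun S => r1 S + r2 S - S) x).
  { intros x Hx. apply (continuous_minus (fun S => r1 S + r2 S) (fun S => S));
      [apply (continuous_plus r1 r2) | apply continuous_id].
    all: apply share_response_continuous; lra. }
  destruct (IVT_le (fun S => r1 S + r2 S - S) (balanced_total (B1 + B2)) Shi (proj1 HShi) Hcont
              ltac:(cbv beta; lra) ltac:(cbv beta; lra))
    as (S0 & HS0 & Hfix); cbv beta in Hfix.
  exists (r1 S0), (r2 S0).
  split; [apply stationary_of_fixed_total |]; unfold r1, r2 in *; lra.
Qed.

Lemma feasible_forced B m s : feasible B B m s -> m = 0 /\ s = B.
Proof. unfold feasible. lra. Qed.

Lemma equilibrium_exists B1 B2 B10 B20 : 0 < B1 -> 0 < B2 ->
  0 <= B10 <= B1 -> 0 <= B20 <= B2 ->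
  exists m1 s1 m2 s2, equilibrium B1 B2 B10 B20 m1 s1 m2 s2 /\
    balanced_total (B1 + B2) <= s1 + s2.
Proof.
  intros HB1 HB2 HB10 HB20.
  destruct (Rlt_le_dec (B10 + B20) (B1 + B2)) as [Hnd | Hdeg].
  - destruct (stationary_exists B1 B2 B10 B20 HB10 HB20 Hnd) as (s1 & s2 & Hst & Hbal).
    exists (B1 - s1), s1, (B2 - s2), s2.
    split; [apply stationary_equilibrium; tauto | exact Hbal].
  - assert (B10 = B1) as -> by lra. assert (B20 = B2) as -> by lra.
    exists 0, B1, 0, B2.
    destruct (balanced_total_spec (B1 + B2) ltac:(lra)) as [Hbal _].
    split; [| lra].
    split; [unfold feasible; lra | split; [unfold feasible; lra | split]];
      intros m' s' Hf; destruct (feasible_forced _ _ _ Hf) as [-> ->]; lra.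
Qed.

Lemma equilibrium_unique B1 B2 B10 B20 m1 s1 m2 s2 m1' s1' m2' s2' :
  0 < B1 -> 0 < B2 -> 0 <= B10 <= B1 -> 0 <= B20 <= B2 ->
  equilibrium B1 B2 B10 B20 m1 s1 m2 s2 -> equilibrium B1 B2 B10 B20 m1' s1' m2' s2' ->
  m1' = m1 /\ s1' = s1 /\ m2' = m2 /\ s2' = s2.
Proof.
  intros HB1 HB2 HB10 HB20 Heq Heq'.
  destruct (Rlt_le_dec (B10 + B20) (B1 + B2)) as [Hnd | Hdeg].
  - assert (Hnd' : B10 < B1 \/ B20 < B2) by lra.
    destruct (equilibrium_stationary _ _ _ _ _ _ _ _ HB1 HB2 (proj1 HB10) (proj1 HB20) Hnd' Heq)
      as (-> & -> & Hst).
    destruct (equilibrium_stationary _ _ _ _ _ _ _ _ HB1 HB2 (proj1 HB10) (proj1 HB20) Hnd' Heq')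
      as (-> & -> & Hst').
    destruct (Rle_dec (s1 + s2) (s1' + s2')) as [Hle | Hgt].
    + destruct (stationary_unique_le _ _ _ _ _ _ _ _ (proj1 HB10) (proj1 HB20) Hst Hst' Hle)
        as [-> ->].
      repeat split.
    + destruct (stationary_unique_le _ _ _ _ _ _ _ _ (proj1 HB10) (proj1 HB20) Hst' Hst
                  ltac:(lra)) as [-> ->].
      repeat split.
  - assert (B10 = B1) as -> by lra. assert (B20 = B2) as -> by lra.
    destruct Heq as (F1 & F2 & _). destruct Heq' as (F1' & F2' & _).
    destruct (feasible_forced _ _ _ F1) as [-> ->].
    destruct (feasible_forced _ _ _ F2) as [-> ->].
    destruct (feasible_forced _ _ _ F1') as [-> ->].
    destruct (feasible_forced _ _ _ F2') as [-> ->].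
    repeat split.
Qed.

End Game.

Lemma revenue_payoff R0 lam Nm Nf a bM bS oM oS : 0 < Nm -> 0 < Nf ->
  revenue R0 lam Nm Nf a bM bS oM oS
  = R0 * payoff a lam (lam * R0 / Nf) (R0 / Nm) bM bS oM oS.
Proof.
  intros HNm HNf. unfold revenue, payoff, band_revenue, uprime, RS, RM.
  replace (lam * (bS + oS) * R0 / Nf) with (lam * R0 / Nf * (bS + oS)) by (field; lra).
  replace ((bM + oM) * R0 / Nm) with (R0 / Nm * (bM + oM)) by (field; lra).
  ring.
Qed.

Lemma is_NE_iff_equilibrium R0 lam Nm Nf a B1 B2 B10 B20 m1 s1 m2 s2 :
  0 < R0 -> 0 < Nm -> 0 < Nf ->
  is_NE R0 lam Nm Nf a B1 B2 B10 B20 m1 s1 m2 s2 <->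
  equilibrium a lam (lam * R0 / Nf) (R0 / Nm) B1 B2 B10 B20 m1 s1 m2 s2.
Proof.
  intros HR0 HNm HNf. unfold is_NE, equilibrium, best_response.
  setoid_rewrite revenue_payoff; try assumption.
  assert (Hscale : forall x y, R0 * x <= R0 * y <-> x <= y).
  { intros x y. split; intro H; [apply Rmult_le_reg_l with R0 | apply Rmult_le_compat_l]; lra. }
  setoid_rewrite Hscale. tauto.
Qed.

Lemma BS_NE_sum_balanced R0 lam Nm Nf a B1 B2 :
  0 < R0 -> 0 < lam -> 0 < Nm -> 0 < Nf -> 0 < a ->
  BS_NE lam Nm Nf a B1 + BS_NE lam Nm Nf a B2
  = balanced_total a lam (lam * R0 / Nf) (R0 / Nm) (B1 + B2).
Proof.
  intros HR0 Hlam HNm HNf Ha. unfold BS_NE, balanced_total.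
  assert (Hpow : Rpower lam (/ a) = lam * Rpower lam (1 / a - 1)).
  { rewrite <- (Rpower_1 lam) at 2 by exact Hlam. rewrite <- Rpower_plus.
    f_equal. field. lra. }
  rewrite Hpow. set (L := Rpower lam (1 / a - 1)).
  assert (HL : 0 < L) by apply Rpower_pos.
  assert (0 < lam * R0 * (L * Nf + Nm)) by (apply Rmult_lt_0_compat; nra).
  field. repeat split; nra.
Qed.

Theorem theorem2 (R0 lam Nm Nf alpha B1 B2 B10 B20 : R) :
  0 < R0 -> 1 < lam -> 0 < Nm -> 0 < Nf -> 0 < alpha < 1 ->
  0 < B1 -> 0 < B2 -> 0 <= B10 <= B1 -> 0 <= B20 <= B2 ->
  exists b1M b1S b2M b2S : R,
    is_NE R0 lam Nm Nf alpha B1 B2 B10 B20 b1M b1S b2M b2S /\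
    (forall c1M c1S c2M c2S : R,
       is_NE R0 lam Nm Nf alpha B1 B2 B10 B20 c1M c1S c2M c2S ->
       c1M = b1M /\ c1S = b1S /\ c2M = b2M /\ c2S = b2S) /\
    BS_NE lam Nm Nf alpha B1 + BS_NE lam Nm Nf alpha B2 <= b1S + b2S.
Proof.
  intros HR0 Hlam HNm HNf Ha HB1 HB2 HB10 HB20.
  assert (HcS : 0 < lam * R0 / Nf) by (apply Rdiv_lt_0_compat; nra).
  assert (HcM : 0 < R0 / Nm) by (apply Rdiv_lt_0_compat; lra).
  destruct (equilibrium_exists alpha lam _ _ Ha Hlam HcS HcM B1 B2 B10 B20 HB1 HB2 HB10 HB20)
    as (m1 & s1 & m2 & s2 & Heq & Hbal).
  exists m1, s1, m2, s2. split; [| split].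
  - apply is_NE_iff_equilibrium; assumption.
  - intros c1M c1S c2M c2S Hne.
    apply (equilibrium_unique alpha lam _ _ Ha Hlam HcS HcM B1 B2 B10 B20 m1 s1 m2 s2);
      try assumption.
    apply is_NE_iff_equilibrium; assumption.
  - rewrite (BS_NE_sum_balanced R0) by lra. exact Hbal.
Qed.
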